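(* Let $k<n$ and $\phi(k)<m<2n$. Then the value in $U_q^+(\mathfrak{so}_{2n})$ of the bracketed word $[x_k\,x_{k+1}\cdots x_{n-2}\,x_n\,y_m]$, where $y_m=e[n+1,m]=[x_{n+1},[x_{n+2},[\dots,[x_{m-1},x_m]\dots]]]$, does not depend on the arrangement of the (skew) brackets on the sequence $x_k,\dots,x_{n-2},x_n,y_m$.
   Context: Let $\mathbf{k}$ be a field, $G$ an abelian group, $n\ge3$, $X=\{x_1,\dots,x_n\}$, $g_i\in G$, characters $\chi^i:G\to\mathbf{k}^*$, $p_{ij}=\chi^i(g_j)$; for homogeneous $u,v$, $p(u,v)=\chi^u(g_v)$ (replace $x_i$ by $g_i$, resp. $\chi^i$). $G\langle X\rangle$: skew group algebra with $x_ig=\chi^i(g)gx_i$; skew bracket $[u,v]=uv-p(u,v)vu$. Fix $q\in\mathbf{k}^*$, $q\ne-1$; assume $p_{ii}=q$ ($1\le i\le n$), $p_{i,i-1}p_{i-1,i}=q^{-1}$ ($1<i<n$), $p_{n-2,n}p_{n,n-2}=q^{-1}$, $p_{n-1,n}p_{n,n-1}=1$, $p_{ij}p_{ji}=1$ for all other $i<j$ with $j>i+1$. $U_q^+(\mathfrak{so}_{2n})$ is the quotient of $G\langle X\rangle$ by the ideal generated by $[x_i,[x_i,x_{i+1}]]$, $[[x_i,x_{i+1}],x_{i+1}]$ ($1\le i\le n-2$), $[x_{n-2},[x_{n-2},x_n]]$, $[[x_{n-2},x_n],x_n]$, $[x_i,x_j]$ ($1\le i<j\le n-1$, $j>i+1$),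 $[x_i,x_n]$ ($i\le n-3$), $[x_{n-1},x_n]$. For $n<i<2n$, $x_i:=x_{2n-i}$; $\phi(i)=2n-i$. (When $k=n-1$ the sequence is $x_n,y_m$.) *)

From HB Require Import structures.
From mathcomp Require Import all_boot all_order all_algebra.
Set Implicit Arguments. Unset Strict Implicit. Unset Printing Implicit Defensive.
Import GRing.Theory.
Local Open Scope ring_scope.

(* Bracketed words (skew-bracket expressions) in the letters x_i, i : nat.
   A leaf [Lf i] stands for the generator x_i (1 <= i <= n). *)
Inductive bexp : Type :=
| Lf of nat
| Br of bexp & bexp.

Fixpoint leaves (t : bexp) : seq nat :=
  match t with Lf i => [:: i] | Br u v => leaves u ++ leaves v end.

Section Skew.
Variables (K : fieldType) (G : zmodType) (g : nat -> G) (chi : nat -> G -> K).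

(* g_u : replace each x_i of u by g_i (G written additively) *)
Definition gdeg (u : bexp) : G := \sum_(i <- leaves u) g i.
Definition chideg (u : bexp) (h : G) : K := \prod_(i <- leaves u) chi i h.
Definition pbr (u v : bexp) : K := chideg u (gdeg v).

Fixpoint beval (A : algType K) (a : nat -> A) (t : bexp) : A :=
  match t with
  | Lf i => a i
  | Br u v => beval a u * beval a v - pbr u v *: (beval a v * beval a u)
  end.
End Skew.

(* is_bracketing s t : t is obtained by an arrangement of (skew) brackets on
   the sequence of blocks s (each block kept as a single factor). *)
Inductive is_bracketing : seq bexp -> bexp -> Prop :=
| isbr_one b : is_bracketing [:: b] b
| isbr_br s1 s2 t1 t2 :
    is_bracketing s1 t1 -> is_bracketing s2 t2 ->
    is_bracketing (s1 ++ s2) (Br t1 t2).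

Fixpoint rnest (l : seq nat) : bexp :=
  match l with
  | [::] => Lf 0
  | [:: i] => Lf i
  | i :: l' => Br (Lf i) (rnest l')
  end.

(* x_i := x_{2n-i} for n < i < 2n *)
Definition xidx (n i : nat) : nat := if (i <= n)%N then i else (2 * n - i)%N.

Definition ebr (n a b : nat) : bexp :=
  rnest [seq xidx n j | j <- iota a (b.+1 - a)].

Definition ym (n m : nat) : bexp := ebr n n.+1 m.

Definition blocks (n k m : nat) : seq bexp :=
  [seq Lf i | i <- iota k (n.-1 - k)] ++ [:: Lf n; ym n m].

Definition so_rels (K : fieldType) (G : zmodType) (g : nat -> G)
  (chi : nat -> G -> K) (n : nat) (A : algType K) (a : nat -> A) : Prop :=
  let ev := beval g chi a in
  (forall i, (1 <= i <= n - 2)%N ->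
         ev (Br (Lf i) (Br (Lf i) (Lf i.+1))) = 0 /\
         ev (Br (Br (Lf i) (Lf i.+1)) (Lf i.+1)) = 0) /\
      ev (Br (Lf (n - 2)) (Br (Lf (n - 2)) (Lf n))) = 0 /\
      ev (Br (Br (Lf (n - 2)) (Lf n)) (Lf n)) = 0 /\
      (forall i j, (1 <= i)%N -> (i < j <= n - 1)%N -> (i.+1 < j)%N ->
         ev (Br (Lf i) (Lf j)) = 0) /\
      (forall i, (1 <= i <= n - 3)%N -> ev (Br (Lf i) (Lf n)) = 0) /\
      ev (Br (Lf (n - 1)) (Lf n)) = 0.

(* If every block of a sequence skew-commutes with every block that is not
   its neighbour, the skew Jacobi identity [[u, v], w] = [u, [v, w]], valid
   as soon as [u, w] = 0, rewrites every bracketing into the right-nested one.  For x_k, ..., x_(n-2), x_n, y_m the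
   far blocks skew-commute by the defining relations, except x_i against
   y_m = [x_(n-1), [x_(n-2), ..., x_(2n-m)]]: there x_i only fails to
   skew-commute with the letters x_(i+1), x_i, x_(i-1), and the quantum Serre
   relations give [x_i, [x_(i+1), [x_i, x_(i-1)]]] = 0. *)

From HB Require Import structures.
From mathcomp Require Import all_boot all_order all_algebra.
From mathcomp Require Import ring zify.
Set Implicit Arguments. Unset Strict Implicit. Unset Printing Implicit Defensive.
Import GRing.Theory.
Local Open Scope ring_scope.

Section Comb5.
Variables (K : fieldType) (V : lmodType K) (w1 w2 w3 w4 w5 : V).

Definition comb5 c1 c2 c3 c4 c5 := c1 *: w1 + c2 *: w2 + c3 *: w3 + c4 *: w4 + c5 *: w5.

Lemma comb5D a1 a2 a3 a4 a5 b1 b2 b3 b4 b5 :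
  comb5 a1 a2 a3 a4 a5 + comb5 b1 b2 b3 b4 b5 =
  comb5 (a1 + b1) (a2 + b2) (a3 + b3) (a4 + b4) (a5 + b5).
Proof. by rewrite /comb5 !scalerDl; do 4 (rewrite addrACA; congr (_ + _)). Qed.

Lemma comb5N a1 a2 a3 a4 a5 :
  - comb5 a1 a2 a3 a4 a5 = comb5 (- a1) (- a2) (- a3) (- a4) (- a5).
Proof. by rewrite /comb5 !opprD !scaleNr. Qed.

Lemma comb5Z k a1 a2 a3 a4 a5 :
  k *: comb5 a1 a2 a3 a4 a5 = comb5 (k * a1) (k * a2) (k * a3) (k * a4) (k * a5).
Proof. by rewrite /comb5 !scalerDr !scalerA. Qed.

Lemma comb5_0 : 0 = comb5 0 0 0 0 0.
Proof. by rewrite /comb5 !scale0r !addr0. Qed.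
Lemma comb5_1 : w1 = comb5 1 0 0 0 0.
Proof. by rewrite /comb5 !scale0r scale1r !addr0. Qed.
Lemma comb5_2 : w2 = comb5 0 1 0 0 0.
Proof. by rewrite /comb5 !scale0r scale1r !addr0 add0r. Qed.
Lemma comb5_3 : w3 = comb5 0 0 1 0 0.
Proof. by rewrite /comb5 !scale0r scale1r !addr0 !add0r. Qed.
Lemma comb5_4 : w4 = comb5 0 0 0 1 0.
Proof. by rewrite /comb5 !scale0r scale1r !addr0 !add0r. Qed.
Lemma comb5_5 : w5 = comb5 0 0 0 0 1.
Proof. by rewrite /comb5 !scale0r scale1r !add0r. Qed.

End Comb5.

(* Proves an identity between linear combinations of the variables w1..w5 by
   comparing coefficients; unused slots are filled with 0. *)
Ltac by_coefficients w1 w2 w3 w4 w5 :=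
  let W := fresh "W" in
  pose W := comb5 w1 w2 w3 w4 w5;
  try (is_var w1; rewrite [w1](comb5_1 w1 w2 w3 w4 w5 : _ = W _ _ _ _ _));
  try (is_var w2; rewrite [w2](comb5_2 w1 w2 w3 w4 w5 : _ = W _ _ _ _ _));
  try (is_var w3; rewrite [w3](comb5_3 w1 w2 w3 w4 w5 : _ = W _ _ _ _ _));
  try (is_var w4; rewrite [w4](comb5_4 w1 w2 w3 w4 w5 : _ = W _ _ _ _ _));
  try (is_var w5; rewrite [w5](comb5_5 w1 w2 w3 w4 w5 : _ = W _ _ _ _ _));
  try rewrite [RHS](comb5_0 w1 w2 w3 w4 w5 : _ = W _ _ _ _ _);
  rewrite /W ?(comb5D, comb5N, comb5Z); congr comb5.

Section SkewBracket.
Variables (K : fieldType) (A : algType K).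
Implicit Types (x y z u v w : A) (c d e : K).

Definition skewbr x y c := x * y - c *: (y * x).

Ltac skew_expand :=
  rewrite /skewbr ?(mulrBl, mulrBr, mulrDl, mulrDr, (=^~ scalerAl), (=^~ scalerAr),
    mulrA, scalerBr, scalerDr, scalerA, scalerN, mulrN, mulNr, opprB, opprD, opprK).

Lemma skewbr_eq0 x y c : (skewbr x y c = 0) <-> (x * y = c *: (y * x)).
Proof. by rewrite /skewbr; split => [/eqP|->]; [rewrite subr_eq0 => /eqP|rewrite subrr]. Qed.

Lemma skewbr_sym x y c d : c * d = 1 -> skewbr x y c = 0 -> skewbr y x d = 0.
Proof. by move=> cd /skewbr_eq0 xy; apply/skewbr_eq0; rewrite xy scalerA mulrC cd scale1r. Qed.

Lemma skew_commute_mul x y z c d :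
  x * y = c *: (y * x) -> x * z = d *: (z * x) -> x * (y * z) = (c * d) *: (y * z * x).
Proof.
by move=> xy xz; rewrite mulrA xy -scalerAl -[y * x * z]mulrA xz -scalerAr scalerA mulrA.
Qed.

Lemma skewbr_comm x y z c d e :
  skewbr x y c = 0 -> skewbr x z d = 0 -> skewbr x (skewbr y z e) (c * d) = 0.
Proof.
move=> /skewbr_eq0 xy /skewbr_eq0 xz; apply/skewbr_eq0.
rewrite /skewbr mulrBr -scalerAr (skew_commute_mul xy xz) (skew_commute_mul xz xy).
by rewrite mulrBl -scalerAl scalerBr !scalerA [d * c]mulrC [e * _]mulrC.
Qed.

Lemma mulr2_rule x1 x2 (e : A) : x1 * x2 = e -> forall t, t * x1 * x2 = t * e.
Proof. by move=> <- t; rewrite mulrA. Qed.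

Lemma mulr3_rule x1 x2 x3 (e : A) : x1 * x2 * x3 = e -> forall t, t * x1 * x2 * x3 = t * e.
Proof. by move=> <- t; rewrite !mulrA. Qed.

Lemma skewbr_jacobi u v w c d e :
  skewbr u w d = 0 -> skewbr (skewbr u v c) w (d * e) = skewbr u (skewbr v w e) (c * d).
Proof.
move=> /skewbr_eq0 uw.
skew_expand; rewrite uw (mulr2_rule uw); skew_expand.
move: (u * v * w) (v * w * u) (w * v * u) (w * u * v) => w1 w2 w3 w4.
by_coefficients w1 w2 w3 w4 (0 : A); ring.
Qed.

Lemma serre_expandl a b p q :
  skewbr a (skewbr a b p) (q * p) = 0 ->
  a * a * b = ((1 + q) * p) *: (a * b * a) - (q * p * p) *: (b * a * a).
Proof.
move=> serre; apply/eqP; rewrite -subr_eq0 -serre; apply/eqP; skew_expand.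
move: (a * a * b) (a * b * a) (b * a * a) => w1 w2 w3.
by_coefficients w1 w2 w3 (0 : A) (0 : A); ring.
Qed.

Lemma serre_expandr (c : A) a r q :
  skewbr (skewbr c a r) a (r * q) = 0 ->
  c * a * a = ((1 + q) * r) *: (a * c * a) - (r * q * r) *: (a * a * c).
Proof.
move=> serre; apply/eqP; rewrite -subr_eq0 -serre; apply/eqP; skew_expand.
move: (c * a * a) (a * c * a) (a * a * c) => w1 w2 w3.
by_coefficients w1 w2 w3 (0 : A) (0 : A); ring.
Qed.

Section SerreTriple.
Variables (a b c : A) (q pab pba pac pca pbc pcb : K).
Hypotheses (q_neq0 : q != 0) (q_neqN1 : q != -1).
Hypotheses (pab_pba : pab * pba = q^-1) (pac_pca : pac * pca = q^-1) (pbc_pcb : pbc * pcb = 1).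
Hypotheses (serre_ab : skewbr a (skewbr a b pab) (q * pab) = 0)
  (serre_ca : skewbr (skewbr c a pca) a (pca * q) = 0) (skew_cb : skewbr c b pcb = 0).

Let pab_neq0 : pab != 0.
Proof. by apply: contra_neq (invr_neq0 q_neq0) => pab0; rewrite -pab_pba pab0 mul0r. Qed.
Let pac_neq0 : pac != 0.
Proof. by apply: contra_neq (invr_neq0 q_neq0) => pac0; rewrite -pac_pca pac0 mul0r. Qed.
Let pbc_neq0 : pbc != 0.
Proof. by apply: contra_neq (oner_neq0 K) => pbc0; rewrite -pbc_pcb pbc0 mul0r. Qed.
Let pba_eq : pba = q^-1 / pab.
Proof. by rewrite -pab_pba mulrAC divff // mul1r. Qed.
Let pca_eq : pca = q^-1 / pac.
Proof. by rewrite -pac_pca mulrAC divff // mul1r. Qed.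
Let pcb_eq : pcb = pbc^-1.
Proof. by rewrite -[pbc^-1]mulr1 -pbc_pcb mulKf. Qed.

Let cb : c * b = pcb *: (b * c) := (skewbr_eq0 _ _ _).1 skew_cb.
Let cb' := mulr2_rule cb.
Let aab := serre_expandl serre_ab.
Let aab' := mulr3_rule aab.
Let caa := serre_expandr serre_ca.
Let caa' := mulr3_rule caa.

Ltac normalize :=
  skew_expand; do ![rewrite (cb, cb', aab, aab', caa, caa'); skew_expand].

(* Expanding c * a * a * b once through a * a * b and once through c * a * a
   gives a relation with the factor 1 + q. *)
Lemma caba_rule : c * a * b * a = pab^-1 *: (pca *: (a * c * a * b)
  - (q * pca * pca * pcb * pab) *: (a * b * a * c) + (q * pab * pab * pcb * pca) *: (b * a * c * a)).
Proof.
have q1_neq0 : 1 + q != 0 by rewrite addrC addr_eq0.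
set X := (X in pab^-1 *: X).
have : (1 + q) *: (X - pab *: (c * a * b * a)) = c * a * a * b - c * a * a * b.
  rewrite [X in _ = _ - X]aab' caa /X; normalize.
  move: (a * c * a * b) (a * b * a * c) (c * a * b * a) (b * a * c * a) (b * a * a * c)
    => w1 w2 w3 w4 w5.
  by_coefficients w1 w2 w3 w4 w5; ring.
move/eqP; rewrite subrr scaler_eq0 (negbTE q1_neq0) subr_eq0 => /eqP ->.
by rewrite scalerA mulVf ?scale1r.
Qed.

Lemma skewbr_serre_triple :
  skewbr a (skewbr b (skewbr a c pac) (pba * pbc)) (pab * (q * pac)) = 0.
Proof.
normalize; rewrite caba_rule; skew_expand.
move: (a * b * a * c) (a * b * c * a) (a * c * a * b) (b * a * a * c) (b * a * c * a)
  => w1 w2 w3 w4 w5.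
by_coefficients w1 w2 w3 w4 w5; rewrite pba_eq pca_eq pcb_eq; field;
  by rewrite q_neq0 pab_neq0 pac_neq0 pbc_neq0.
Qed.

End SerreTriple.

End SkewBracket.

Section BracketedWords.
Variables (K : fieldType) (G : zmodType) (g : nat -> G) (chi : nat -> G -> K).
Hypothesis chi_mul : forall i x y, chi i (x + y) = chi i x * chi i y.
Variables (A : algType K) (a : nat -> A).

Local Notation ev := (beval g chi a).
Local Notation pb := (pbr g chi).

Lemma beval_Br u v : ev (Br u v) = skewbr (ev u) (ev v) (pb u v).
Proof. by []. Qed.

Lemma pbr_Brl u v w : pb (Br u v) w = pb u w * pb v w.
Proof. by rewrite /pbr /chideg /= big_cat. Qed.

Lemma pbr_Brr u v w : pb u (Br v w) = pb u v * pb u w.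
Proof.
rewrite /pbr /chideg /gdeg /= big_cat /= -big_split /=.
by apply: eq_bigr => i _; rewrite chi_mul.
Qed.

Lemma pbr_Lf i j : pb (Lf i) (Lf j) = chi i (g j).
Proof. by rewrite /pbr /chideg /gdeg /= !big_seq1. Qed.

Definition skew_comm u v := ev (Br u v) == 0.

Lemma skew_comm_Br u v w : skew_comm u v -> skew_comm u w -> skew_comm u (Br v w).
Proof. by rewrite /skew_comm !beval_Br pbr_Brr => /eqP uv /eqP uw; rewrite skewbr_comm. Qed.

(* The coefficient of a skew bracket depends on the underlying words, so a
   bracketed word may be replaced inside brackets only by one with the same
   value and the same underlying word. *)
Definition bequiv u v := ev u = ev v /\ leaves u = leaves v.

Lemma bequiv_refl u : bequiv u u.
Proof. by []. Qed.

Lemma bequiv_sym u v : bequiv u v -> bequiv v u.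
Proof. by case. Qed.

Lemma bequiv_trans u v w : bequiv u v -> bequiv v w -> bequiv u w.
Proof. by case=> e1 l1 [e2 l2]; split; [rewrite e1 | rewrite l1]. Qed.

Lemma bequiv_Br u u' v v' : bequiv u u' -> bequiv v v' -> bequiv (Br u v) (Br u' v').
Proof.
move=> [e1 l1] [e2 l2]; split; last by rewrite /= l1 l2.
by rewrite !beval_Br e1 e2 /pbr /chideg /gdeg l1 l2.
Qed.

Lemma bequiv_jacobi u v w : skew_comm u w -> bequiv (Br (Br u v) w) (Br u (Br v w)).
Proof.
move=> /eqP uw; split; last by rewrite /= catA.
by move: uw; rewrite !beval_Br pbr_Brl pbr_Brr; apply: skewbr_jacobi.
Qed.

Fixpoint rbracket (s : seq bexp) : bexp :=
  match s with [::] => Lf 0 | [:: b] => b | b :: s' => Br b (rbracket s') end.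

Fixpoint far_skew_comm (s : seq bexp) : bool :=
  if s is b :: s' then all (skew_comm b) (behead s') && far_skew_comm s' else true.

Lemma far_skew_comm_catl s1 s2 : far_skew_comm (s1 ++ s2) -> far_skew_comm s1.
Proof.
elim: s1 => [|b s IH] //= /andP [h1 /IH ->]; rewrite andbT.
by case: s h1 {IH} => //= c s; rewrite all_cat => /andP [].
Qed.

Lemma far_skew_comm_catr s1 s2 : far_skew_comm (s1 ++ s2) -> far_skew_comm s2.
Proof. by elim: s1 => [|b s IH] //= /andP [_ /IH]. Qed.

Lemma far_skew_commP s :
  (forall i j, (i.+1 < j < size s)%N -> skew_comm (nth (Lf 0) s i) (nth (Lf 0) s j)) ->
  far_skew_comm s.
Proof.
elim: s => [|b s IH] //= H; apply/andP; split; last by apply: IH => i j ij; apply: (H i.+1 j.+1).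
apply/(all_nthP (Lf 0)) => i; rewrite size_behead => hi.
by rewrite nth_behead; apply: (H 0%N i.+2); case: s hi {IH H} => //= c s; rewrite ltnS.
Qed.

Lemma is_bracketing_nonnil s t : is_bracketing s t -> ~~ nilp s.
Proof. by elim=> [b|[|b s1] s2 t1 t2]. Qed.

Lemma skew_comm_rbracket b s : ~~ nilp s -> all (skew_comm b) s -> skew_comm b (rbracket s).
Proof.
elim: s => [|c [|d s] IH] //= _ /andP [bc bs]; first by [].
exact: skew_comm_Br bc (IH _ bs).
Qed.

Lemma bequiv_Br_rbracket s1 s2 : ~~ nilp s1 -> ~~ nilp s2 -> far_skew_comm (s1 ++ s2) ->
  bequiv (Br (rbracket s1) (rbracket s2)) (rbracket (s1 ++ s2)).
Proof.
elim: s1 => [|b [|c s1] IH] // _ s2_nonnil; first by case: s2 s2_nonnil {IH}.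
move=> /= /andP [b_far far]; rewrite all_cat in b_far; case/andP: b_far => _ b_s2.
apply: bequiv_trans (bequiv_jacobi _ (skew_comm_rbracket s2_nonnil b_s2)) _.
exact: bequiv_Br (bequiv_refl b) (IH isT s2_nonnil far).
Qed.

Lemma bequiv_bracketing s t : is_bracketing s t -> far_skew_comm s -> bequiv t (rbracket s).
Proof.
elim=> [b|s1 s2 t1 t2 B1 IH1 B2 IH2 far] //.
apply: bequiv_trans (bequiv_Br_rbracket (is_bracketing_nonnil B1) (is_bracketing_nonnil B2) far).
exact: bequiv_Br (IH1 (far_skew_comm_catl far)) (IH2 (far_skew_comm_catr far)).
Qed.

Lemma beval_bracketing_eq s t1 t2 : far_skew_comm s ->
  is_bracketing s t1 -> is_bracketing s t2 -> ev t1 = ev t2.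
Proof.
by move=> far /bequiv_bracketing /(_ far) [-> _] /bequiv_bracketing /(_ far) [-> _].
Qed.

Lemma skew_comm_extend x y w z : skew_comm x z -> skew_comm y z ->
  skew_comm x (Br y (Br x w)) -> skew_comm x (Br y (Br x (Br w z))).
Proof.
move=> xz yz /eqP xyxw; apply/eqP.
have E1 := bequiv_sym (bequiv_jacobi w xz).
have E2 := bequiv_sym (bequiv_jacobi (Br x w) yz).
have E3 := bequiv_sym (bequiv_jacobi (Br y (Br x w)) xz).
have [-> _] := bequiv_trans (bequiv_Br (bequiv_refl x)
  (bequiv_trans (bequiv_Br (bequiv_refl y) E1) E2)) E3.
by rewrite beval_Br xyxw /skewbr mul0r mulr0 scaler0 subrr.
Qed.

Lemma rnest_rbracket l : rnest l = rbracket (map Lf l).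
Proof. by elim: l => [|i [|j l] IH] //; apply: (congr1 (Br (Lf i)) IH). Qed.

Fixpoint downto (t L : nat) : seq nat := if L is L'.+1 then t :: downto t.-1 L' else [::].

Lemma mem_downto t L j : j \in downto t L -> (t.+1 - L <= j <= t)%N.
Proof. by elim: L t => [|L IH] t //=; rewrite inE => /orP [/eqP -> | /IH]; lia. Qed.

Lemma map_xidx_iota n j L : map (xidx n) (iota (n.+1 + j) L) = downto (n.-1 - j) L.
Proof.
elim: L j => [|L IH] j //=.
rewrite /xidx ifN; last by lia.
have -> : (2 * n - (n.+1 + j) = n.-1 - j)%N by lia.
by rewrite -addnS IH; congr (_ :: downto _ _); lia.
Qed.

Lemma ym_downto n m : ym n m = rnest (downto n.-1 (m - n)).
Proof. by rewrite /ym /ebr subSS -(addn0 n.+1) map_xidx_iota subn0. Qed.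

Section Letters.
Variables (n : nat) (q : K).
Hypotheses (q_neq0 : q != 0) (q_neqN1 : q != -1).
Hypothesis p_diag : forall i, (1 <= i <= n)%N -> chi i (g i) = q.
Hypothesis p_adj : forall i, (1 < i < n)%N -> chi i (g i.-1) * chi i.-1 (g i) = q^-1.
Hypothesis p_far : forall i j, (1 <= i)%N -> (i < j <= n)%N -> (i.+1 < j)%N ->
  (i, j) != ((n - 2)%N, n) -> chi i (g j) * chi j (g i) = 1.
Hypothesis rels : so_rels g chi n a.

Lemma skew_comm_far i j : (1 <= i)%N -> (i.+1 < j <= n - 1)%N -> skew_comm (Lf i) (Lf j).
Proof. by move=> i1 ij; have [_ [_ [_ [far _]]]] := rels; apply/eqP/far; lia. Qed.

Lemma skew_comm_far_rev i j : (1 <= j)%N -> (j.+1 < i <= n - 1)%N -> skew_comm (Lf i) (Lf j).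
Proof.
move=> j1 ji; move: (skew_comm_far j1 ji); rewrite /skew_comm !beval_Br !pbr_Lf.
move=> /eqP /skewbr_sym -> //; rewrite p_far //; try lia.
by apply/negP => /eqP [_]; lia.
Qed.

Lemma skew_comm_far_n i : (1 <= i <= n - 3)%N -> skew_comm (Lf i) (Lf n).
Proof. by move=> hi; have [_ [_ [_ [_ [far_n _]]]]] := rels; apply/eqP/far_n. Qed.

Lemma skew_comm_serre i : (2 <= i <= n - 2)%N ->
  skew_comm (Lf i) (Br (Lf i.+1) (Br (Lf i) (Lf i.-1))).
Proof.
move=> hi; have [serre _] := rels.
have [serre_i _] := serre i ltac:(lia).
have [_ serre_i1] := serre i.-1 ltac:(lia); rewrite prednK in serre_i1; last by lia.
have far := skew_comm_far (i := i.-1) (j := i.+1) ltac:(lia) ltac:(lia).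
move: serre_i serre_i1 far; rewrite /skew_comm !beval_Br !pbr_Brr !pbr_Brl !pbr_Lf !p_diag; try lia.
move=> serre_i serre_i1 /eqP far; apply/eqP; apply: skewbr_serre_triple serre_i serre_i1 far => //.
- by rewrite mulrC (p_adj (i := i.+1)) //; lia.
- by apply: p_adj; lia.
- rewrite mulrC p_far //; try lia.
  by apply/negP => /eqP [_]; lia.
Qed.

Lemma skew_comm_rnest i l : ~~ nilp l -> (forall j, j \in l -> skew_comm (Lf i) (Lf j)) ->
  skew_comm (Lf i) (rnest l).
Proof.
move=> l_nonnil comm_l; rewrite rnest_rbracket; apply: skew_comm_rbracket.
  by case: l l_nonnil {comm_l}.
by rewrite all_map; apply/allP => j; apply: comm_l.
Qed.

(* Only the letters x_(i+1), x_i, x_(i-1) of the run fail to skew-commute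
   with x_i; they are absorbed by [x_i, [x_(i+1), [x_i, x_(i-1)]]] = 0. *)
Lemma skew_comm_downto L i t : (2 <= i)%N -> (t.+1 - L < i < t)%N -> (L <= t <= n - 1)%N ->
  skew_comm (Lf i) (rnest (downto t L)).
Proof.
elim: L i t => [|L IH] i t hi it Lt; first by lia.
have [t_eq|t_far] : (t = i.+1 \/ i.+2 <= t)%N by lia.
  subst t; case: L IH it Lt => [|[|[|L]]] IH it Lt; try lia; first by apply: skew_comm_serre; lia.
  have far z : (i <= z <= i.+1)%N -> skew_comm (Lf z) (rnest (downto i.-2 L.+1)).
    move=> zi; apply: skew_comm_rnest => // j /mem_downto hj.
    by apply: skew_comm_far_rev; lia.
  apply: skew_comm_extend; [apply: far; lia | apply: far; lia |].
  by apply: (@skew_comm_serre i); lia.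
case: L IH it Lt => [|L] IH it Lt; first by lia.
apply: skew_comm_Br; first by apply: skew_comm_far; lia.
by apply: IH; lia.
Qed.

Lemma far_skew_comm_blocks k m : (1 <= k < n)%N -> (2 * n - k < m < 2 * n)%N ->
  far_skew_comm (blocks n k m).
Proof.
move=> hk hm; apply: far_skew_commP.
rewrite /blocks size_cat size_map size_iota /= => i j ij.
set r := (n.-1 - k)%N.
have ir : (i < r)%N by lia.
rewrite nth_cat size_map size_iota -/r ir (nth_map 0%N) ?size_iota // nth_iota //.
rewrite nth_cat size_map size_iota -/r.
case: (ltnP j r) => jr.
  by rewrite (nth_map 0%N) ?size_iota // nth_iota //; apply: skew_comm_far; lia.
have [j_eq|j_eq] : (j = r \/ j = r.+1)%N by lia.
  by subst j; rewrite subnn /=; apply: skew_comm_far_n; lia.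
by subst j; rewrite subSn // subnn /= ym_downto; apply: skew_comm_downto; lia.
Qed.

End Letters.

End BracketedWords.

Theorem lemma6p5 (K : fieldType) (G : zmodType) (n : nat) (g : nat -> G)
  (chi : nat -> G -> K) (q : K)
  (chi_mul : forall i x y, chi i (x + y) = chi i x * chi i y)
  (chi_unit : forall i x, chi i x != 0)
  (q_unit : q != 0) (q_neq : q != -1) (n_ge3 : (3 <= n)%N) :
  let p i j := chi i (g j) in
  (forall i, (1 <= i <= n)%N -> p i i = q) ->
  (forall i, (1 < i < n)%N -> p i i.-1 * p i.-1 i = q^-1) ->
  p (n - 2)%N n * p n (n - 2)%N = q^-1 ->
  p (n - 1)%N n * p n (n - 1)%N = 1 ->
  (forall i j, (1 <= i)%N -> (i < j <= n)%N -> (i.+1 < j)%N ->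
     (i, j) != ((n - 2)%N, n) -> p i j * p j i = 1) ->
  forall k m : nat, (1 <= k < n)%N -> (2 * n - k < m < 2 * n)%N ->
  forall (A : algType K) (a : nat -> A), so_rels g chi n a ->
  forall t1 t2 : bexp,
    is_bracketing (blocks n k m) t1 -> is_bracketing (blocks n k m) t2 ->
    beval g chi a t1 = beval g chi a t2.
Proof.
move=> p p_diag p_adj _ _ p_far k m hk hm A a rels t1 t2.
apply: (beval_bracketing_eq chi_mul).
exact: (far_skew_comm_blocks chi_mul q_unit q_neq p_diag p_adj p_far rels hk hm).
Qed.
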